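(* For every signed composition $\alpha=(a_1,\dots,a_k)$ of $n$, $$X_{\{0\}}\cdot\widetilde{S}_\alpha=X^0_{|\alpha|},$$ where the product is taken in $\mathbb{Q}B_n$.
   Context: $B_n$: signed permutations $w=w_1\dots w_n$ (bijections of $\{\pm1,\dots,\pm n\}$ with $w(-i)=-w(i)$), product in $\mathbb{Q}B_n$ given by composition $(uv)(i)=u(v(i))$; values ordered $\cdots<-2<-1<1<2<\cdots$, $w_0=0$; $\mathrm{Des}(w)=\{i\in\{0,\dots,n-1\}:w_i>w_{i+1}\}$; $X_J=\sum_{\mathrm{Des}(w)\subseteq J}w$. So $X_{\{0\}}$ is the sum of all $w$ with $w_1<\dots<w_n$. A signed composition of $n$ is a sequence $\alpha=(a_1,\dots,a_k)$ of nonzero integers with $\sum|a_i|=n$; $|\alpha|=(|a_1|,\dots,|a_k|)$. $\widetilde{S}_\alpha$ is the sum of all $w\in B_n$ such that, on each of the successive intervals of $[n]$ of lengths $|a_1|,\dots,|a_k|$, the entries $w_j$ are increasing and all have the sign of the corresponding $a_i$. For an ordinary composition $\beta=(b_1,\dots,b_h)$ of $n$, with associated subset $J_\beta=\{b_1,b_1+b_2,\dots,b_1+\dots+b_{h-1}\}\subseteq[n-1]$, $X^0_\beta=X_{\{0\}\cup J_\beta}$. *)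

From mathcomp Require Import all_boot all_order all_algebra all_fingroup.
Set Implicit Arguments. Unset Strict Implicit. Unset Printing Implicit Defensive.
Import Order.TTheory GRing.Theory Num.Theory.
Local Open Scope ring_scope.

(* A signed permutation w of B_n, encoded as (p, s): for 0-based position i,
   the window entry w_{i+1} is  (-1)^(s i) * (p i + 1). *)
Definition SB (n : nat) : finType := ({perm 'I_n} * {ffun 'I_n -> bool})%type.

Definition sbval n (w : SB n) (i : 'I_n) : int :=
  (-1) ^+ (w.2 i) * ((w.1 i).+1 : int).

(* w_i for i in 0..n with the convention w_0 = 0 *)
Definition wext n (w : SB n) (i : nat) : int :=
  nth 0 (0 :: [seq sbval w j | j <- enum 'I_n]) i.

(* Des(w) as a subset of {0,...,n-1} (encoded as {set 'I_n}) *)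
Definition Des n (w : SB n) : {set 'I_n} :=
  [set i : 'I_n | wext w i.+1 < wext w i].

Definition QB n := {ffun SB n -> rat}.

(* product in Q B_n induced by composition (uv)(i) = u(v(i)), with
   u(-j) = -u(j): (uv)_{i} = sign(v_i) * u_{|v_i|}. *)
Definition composes n (w u v : SB n) : bool :=
  [forall i : 'I_n, sbval w i == (-1) ^+ (v.2 i) * sbval u (v.1 i)].

Definition qbmul n (f g : QB n) : QB n :=
  [ffun w => \sum_(u : SB n) \sum_(v : SB n)
               (if composes w u v then f u * g v else 0)].

Definition XJ n (J : {set 'I_n}) : QB n :=
  [ffun w => if Des w \subset J then 1 else 0].

Definition signed_composition (n : nat) (alpha : seq int) : Prop :=
  all (fun a => a != 0) alpha /\ sumn [seq absz a | a <- alpha] = n.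

(* block index of each 0-based position *)
Definition blocks (alpha : seq int) : seq nat :=
  flatten [seq nseq (absz (nth 0 alpha k)) k | k <- iota 0 (size alpha)].

(* S~_alpha : entries increasing inside each block, and of the block's sign *)
Definition Stilde n (alpha : seq int) : QB n :=
  [ffun w =>
     if [forall i : 'I_n,
           ((0 < nth 0 alpha (nth 0%N (blocks alpha) i)) == (0 < sbval w i))]
        && [forall i : 'I_n,
           (nth 0%N (blocks alpha) i == nth 0%N (blocks alpha) i.+1)
             && (i.+1 < n)%N ==> (wext w i.+1 < wext w i.+2)]
     then 1 else 0].

(* J_beta for the ordinary composition |alpha| : partial sums b1, ..., b1+..+b_{h-1} *)
Definition Jabs (alpha : seq int) : seq nat :=
  [seq \sum_(j < k) absz (nth 0 alpha j) | k <- iota 1 (size alpha).-1].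

(* X^0_{|alpha|} = X_{{0} \cup J_{|alpha|}} *)
Definition X0abs n (alpha : seq int) : QB n :=
  XJ [set i : 'I_n | (val i == 0%N) || (val i \in Jabs alpha)].

From mathcomp Require Import all_boot all_order all_algebra all_fingroup.
From mathcomp Require Import zify.
Set Implicit Arguments. Unset Strict Implicit. Unset Printing Implicit Defensive.
Import Order.TTheory GRing.Theory Num.Theory.
Local Open Scope ring_scope.

(* The coefficient of [w] in the product counts the factorizations [w = u v]
   with [u] increasing and [v] in the support of S~_alpha; [v = u^-1 w] is
   determined by [u]. Since [v_i] must carry the sign [e_i] of its block,
   [u (|v_i|) = e_i w_i]: the values of [u] form the set of the [e_i w_i], so
   an increasing [u] is unique, namely this set listed in increasing order.
   Then [v_i = e_i (1 + rank of e_i w_i)], which increases along a block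
   exactly when [w] does. Hence the coefficient is 1 when [w] has no descent
   inside a block, i.e. when [Des w] lies in the union of {0} and J_|alpha|,
   and 0 otherwise. *)

Lemma ltr_signM2 (R : numDomainType) (b : bool) (x y : R) :
  ((-1) ^+ b * x < (-1) ^+ b * y) = if b then y < x else x < y.
Proof. by case: b; rewrite ?mul1r ?mulN1r ?ltrN2. Qed.

Definition signed_val (b : bool) (a : nat) : int := (-1) ^+ b * (a.+1)%:Z.

Lemma sbvalE n (w : SB n) i : sbval w i = signed_val (w.2 i) (w.1 i).
Proof. by []. Qed.

Lemma signed_val_gt0 b a : (0 < signed_val b a) = ~~ b.
Proof. by case: b; rewrite /signed_val ?mul1r ?mulN1r; lia. Qed.

Lemma signed_val_inj b a c d :
  signed_val b a = signed_val c d -> b = c /\ a = d.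
Proof. by case: b; case: c; rewrite /signed_val ?mul1r ?mulN1r => h; split; lia. Qed.

Lemma signed_val_lt b a d :
  (signed_val b a < signed_val b d) = if b then (d < a)%N else (a < d)%N.
Proof. by rewrite /signed_val ltr_signM2; case: b; lia. Qed.

Lemma signr_signed_val (b c : bool) a :
  (-1) ^+ b * signed_val c a = signed_val (b (+) c) a.
Proof. by rewrite /signed_val mulrA signr_addb. Qed.

Lemma card_ord_lt n (j : 'I_n) : #|[set i : 'I_n | (i < j)%N]| = j.
Proof.
have jn : (j <= n)%N := ltnW (ltn_ord j).
have widen_inj : injective (widen_ord jn) by move=> a b [] /val_inj.
rewrite -[RHS]card_ord -(card_imset _ widen_inj).
apply: eq_card => i; rewrite inE; apply/idP/imsetP => [ij | [k _ ->]].
  by exists (Ordinal ij) => //; apply: val_inj.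
exact: ltn_ord k.
Qed.

Lemma homo_ltn_ord (disp : Order.disp_t) (T : porderType disp) n (f : 'I_n -> T) :
  (forall i j : 'I_n, val j = (val i).+1 -> (f i < f j)%O) ->
  {homo f : i j / (i < j)%N >-> (i < j)%O}.
Proof.
move=> fS i j; pose g k := f (insubd i k).
have gE (k : 'I_n) : g k = f k by rewrite /g valKd.
rewrite -gE -[f j]gE.
apply: (homo_ltn_in (D := [pred k | k < n]%N) (r := fun x y => (x < y)%O)).
- by move=> ? ? ?; apply: lt_trans.
- by move=> a b _ bn k /andP [_ kb]; apply: ltn_trans kb bn.
- by move=> k; rewrite !inE => kn k1n; apply: fS; rewrite /= !val_insubd kn k1n.
- exact: ltn_ord.
- exact: ltn_ord.
Qed.

Section Rank.
Context {disp : Order.disp_t} {T : orderType disp} {n : nat}.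
Implicit Types f : 'I_n -> T.

Definition ord_rank f (m : 'I_n) : nat := #|[set i | (f i < f m)%O]|.

Lemma ord_rank_lt f m : (ord_rank f m < n)%N.
Proof.
rewrite -[X in (_ < X)%N]card_ord -cardsT; apply: proper_card.
by rewrite properT; apply/eqP => /setP/(_ m); rewrite !inE ltxx.
Qed.

Lemma ord_rank_mono f a b : (f a < f b)%O -> (ord_rank f a < ord_rank f b)%N.
Proof.
move=> ab; apply: proper_card; apply/properP; split.
  by apply/subsetP => i; rewrite !inE => /lt_trans; apply.
by exists a; rewrite !inE ?ltxx.
Qed.

Lemma ord_rank_inj f : injective f -> injective (ord_rank f).
Proof.
move=> f_inj a b e; case: (ltgtP (f a) (f b)) => [ab | ba | /f_inj //].
- by have := ord_rank_mono ab; rewrite e ltnn.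
- by have := ord_rank_mono ba; rewrite e ltnn.
Qed.

Lemma ord_rank_perm f (p : {perm 'I_n}) j : ord_rank (f \o p) j = ord_rank f (p j).
Proof.
rewrite /ord_rank -[RHS](card_preimset _ (@perm_inj _ p)).
by apply: eq_card => i; rewrite !inE.
Qed.

Lemma ord_rank_id f : {homo f : i j / (i < j)%N >-> (i < j)%O} ->
  forall j, ord_rank f j = j.
Proof.
move=> f_mono j; rewrite /ord_rank -[RHS]card_ord_lt; apply: eq_card => i.
rewrite !inE; case: (ltngtP i j) => [ij | ji | /val_inj ->]; last by rewrite ltxx.
- by rewrite f_mono.
- by apply/negbTE; rewrite -leNgt ltW // f_mono.
Qed.

Definition ord_rank_ordinal f m : 'I_n := Ordinal (ord_rank_lt f m).

Lemma ord_rank_ordinal_inj f : injective f -> injective (ord_rank_ordinal f).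
Proof. by move=> f_inj a b /(congr1 val) /ord_rank_inj; apply. Qed.

End Rank.

Lemma wext_succ n (w : SB n) (i : 'I_n) : wext w i.+1 = sbval w i.
Proof. by rewrite /wext /= (nth_map i) ?size_enum_ord // nth_ord_enum. Qed.

Lemma sbval_inj n (w : SB n) : injective (sbval w).
Proof. by move=> i j /signed_val_inj [_ /val_inj /perm_inj]. Qed.

Definition ascending_at n (E : pred nat) (w : SB n) : Prop :=
  forall i j : 'I_n, val j = (val i).+1 -> E i -> sbval w i < sbval w j.

Lemma Des_subset_ascending n (E : pred nat) (A : {set 'I_n}) (w : SB n) :
  (forall j : 'I_n, val j = 0%N -> j \in A) ->
  (forall i j : 'I_n, val j = (val i).+1 -> (j \notin A) = E i) ->
  Des w \subset A <-> ascending_at E w.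
Proof.
move=> A0 AE; split => [/subsetP DesA i j ij Ei | asc].
  have jA : j \notin A by rewrite (AE i j ij).
  case: (ltgtP (sbval w i) (sbval w j)) => // [ji | /sbval_inj ij_eq].
    by move: jA; rewrite DesA // inE ij !wext_succ -ij wext_succ.
  by move: ij; rewrite ij_eq; lia.
apply/subsetP => j; rewrite inE; apply: contraLR => jA.
case j0: (val j) => [|k]; first by rewrite A0 in jA.
have kn : (k < n)%N by have := ltn_ord j; rewrite j0; lia.
have := asc (Ordinal kn) j j0; rewrite -(AE (Ordinal kn) j j0) jA => /(_ isT) /ltW.
by rewrite -leNgt (wext_succ w (Ordinal kn)) -j0 wext_succ.
Qed.

Definition sb_ldiv n (u w : SB n) : SB n :=
  let p := (w.1 * u.1^-1)%g in (p, [ffun i => w.2 i (+) u.2 (p i)]).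

Lemma sb_ldiv_perm n (u w : SB n) i : (sb_ldiv u w).1 i = u.1^-1%g (w.1 i).
Proof. by rewrite permM. Qed.

Lemma sb_ldiv_sign n (u w : SB n) i :
  (sb_ldiv u w).2 i = w.2 i (+) u.2 ((sb_ldiv u w).1 i).
Proof. by rewrite ffunE. Qed.

Lemma sbval_ldiv n (u w : SB n) i :
  sbval w i = (-1) ^+ ((sb_ldiv u w).2 i) * sbval u ((sb_ldiv u w).1 i).
Proof.
by rewrite !sbvalE signr_signed_val sb_ldiv_sign -addbA addbb addbF sb_ldiv_perm permKV.
Qed.

Lemma composes_ldiv n (u w : SB n) : composes w u (sb_ldiv u w).
Proof. by apply/forallP => i; rewrite -sbval_ldiv. Qed.

Lemma composes_eq_ldiv n (w u v : SB n) : composes w u v -> v = sb_ldiv u w.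
Proof.
move/forallP => wuv.
have {}wuv i : w.1 i = u.1 (v.1 i) /\ w.2 i = v.2 i (+) u.2 (v.1 i).
  move/eqP: (wuv i); rewrite !sbvalE signr_signed_val => /signed_val_inj [-> e].
  by split => //; apply: val_inj.
have v1E i : v.1 i = (sb_ldiv u w).1 i by rewrite sb_ldiv_perm (proj1 (wuv i)) permK.
case: v v1E wuv => p s /= v1E wuv; congr pair; first by apply/permP.
apply/ffunP => i; rewrite sb_ldiv_sign -v1E (proj2 (wuv i)).
by rewrite -addbA addbb addbF.
Qed.

Lemma qbmulE n (f g : QB n) w : qbmul f g w = \sum_u f u * g (sb_ldiv u w).
Proof.
rewrite ffunE; apply: eq_bigr => u _.
rewrite (bigD1 (sb_ldiv u w)) //= composes_ldiv big1 ?addr0 // => v.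
by case: ifP => // /composes_eq_ldiv ->; rewrite eqxx.
Qed.

Lemma ascending_homo n (u : SB n) :
  ascending_at predT u -> {homo sbval u : i j / (i < j)%N >-> i < j}.
Proof. by move=> asc; apply: homo_ltn_ord => i j ij; apply: asc. Qed.

Section SortedFactor.
Variables (n : nat) (pos link : pred nat).
Hypothesis pos_link : forall k, link k -> pos k = pos k.+1.
Implicit Types u v w : SB n.

Definition patterned v : Prop := forall i : 'I_n, v.2 i = ~~ pos i.

Lemma ascending_of_factor u w : ascending_at predT u ->
  patterned (sb_ldiv u w) -> ascending_at link (sb_ldiv u w) -> ascending_at link w.
Proof.
move=> /ascending_homo u_mono v_pat v_asc i j ij link_i.
rewrite !(sbval_ldiv u w) !v_pat ij -(pos_link link_i) ltr_signM2.
have := v_asc i j ij link_i.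
rewrite !sbvalE !v_pat ij -(pos_link link_i) signed_val_lt.
by case: (pos i) => /= lt_ij; apply: u_mono.
Qed.

(* [folded_val w m] is [e_i w_i], with [e_i = 1] iff [pos i], for the position
   [i] such that [|w_i| = m + 1]. *)
Definition folded_sign w (m : 'I_n) : bool :=
  let i := (w.1^-1)%g m in w.2 i (+) ~~ pos i.

Definition folded_val w (m : 'I_n) : int := signed_val (folded_sign w m) m.

Lemma folded_val_inj w : injective (folded_val w).
Proof. by move=> a b /signed_val_inj [_ /val_inj]. Qed.

Lemma folded_valE w i : folded_val w (w.1 i) = (-1) ^+ (~~ pos i) * sbval w i.
Proof. by rewrite /folded_val /folded_sign permK sbvalE signr_signed_val addbC. Qed.

Definition sort_perm w : {perm 'I_n} := perm (ord_rank_ordinal_inj (@folded_val_inj w)).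

Lemma sort_permE w m : val (sort_perm w m) = ord_rank (folded_val w) m.
Proof. by rewrite permE. Qed.

Definition sorted_factor w : SB n :=
  let q := (sort_perm w)^-1%g in (q, [ffun j => folded_sign w (q j)]).

Lemma sbval_sorted_factor w j :
  sbval (sorted_factor w) j = folded_val w ((sort_perm w)^-1%g j).
Proof. by rewrite sbvalE ffunE. Qed.

Lemma sorted_factor_ascending w : ascending_at predT (sorted_factor w).
Proof.
move=> i j ij _; rewrite !sbval_sorted_factor.
have rankK k : ord_rank (folded_val w) ((sort_perm w)^-1%g k) = k.
  by rewrite -sort_permE permKV.
case: ltgtP => // [/ord_rank_mono | /folded_val_inj ij_eq].
  by rewrite !rankK ij ltnNge leqnSn.
by move: (rankK j); rewrite -ij_eq rankK => /val_inj ji; move: ij; rewrite ji; lia.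
Qed.

Lemma ldiv_sorted_factor_perm w i :
  (sb_ldiv (sorted_factor w) w).1 i = sort_perm w (w.1 i).
Proof. by rewrite sb_ldiv_perm invgK. Qed.

Lemma patterned_ldiv_sorted_factor w : patterned (sb_ldiv (sorted_factor w) w).
Proof.
move=> i; rewrite sb_ldiv_sign ldiv_sorted_factor_perm ffunE permK.
by rewrite /folded_sign permK addbA addbb.
Qed.

Lemma ascending_ldiv_sorted_factor w :
  ascending_at link w -> ascending_at link (sb_ldiv (sorted_factor w) w).
Proof.
move=> w_asc i j ij link_i.
rewrite !sbvalE !patterned_ldiv_sorted_factor !ldiv_sorted_factor_perm.
rewrite ij -(pos_link link_i) signed_val_lt !sort_permE.
have := w_asc i j ij link_i.
by case pos_i: (pos i) => /= lt_ij; apply: ord_rank_mono;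
  rewrite !folded_valE ij -(pos_link link_i) ltr_signM2 pos_i.
Qed.

Lemma sorted_factor_unique u w :
  ascending_at predT u -> patterned (sb_ldiv u w) -> u = sorted_factor w.
Proof.
move=> u_asc v_pat.
have u2E j : u.2 j = folded_sign w (u.1 j).
  have := v_pat ((w.1^-1)%g (u.1 j)).
  rewrite sb_ldiv_sign sb_ldiv_perm !permKV permK /folded_sign => <-.
  by rewrite addbA addbb.
have sort_u j : sort_perm w (u.1 j) = j.
  apply: val_inj; rewrite sort_permE -ord_rank_perm.
  rewrite -[RHS](ord_rank_id (ascending_homo u_asc) j).
  by apply: eq_card => x; rewrite !inE /= !sbvalE !u2E.
have u1E : u.1 = (sort_perm w)^-1%g.
  by apply/permP => j; rewrite -{2}(sort_u j) permK.
case: u u1E u2E {u_asc v_pat sort_u} => p s /= -> u2E.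
by congr pair; apply/ffunP => j; rewrite ffunE u2E.
Qed.

End SortedFactor.

Lemma blocks_cons (a : int) al :
  blocks (a :: al) = nseq (absz a) 0%N ++ map S (blocks al).
Proof.
rewrite /blocks /= -[1%N]addn0 iotaDl -map_comp map_flatten -map_comp.
by congr (_ ++ flatten _); apply: eq_map => k /=; rewrite map_nseq.
Qed.

Lemma size_blocks al : size (blocks al) = sumn [seq absz a | a <- al].
Proof.
by elim: al => //= a al IH; rewrite blocks_cons size_cat size_nseq size_map IH.
Qed.

Lemma Jabs_cons (a b : int) al :
  Jabs (a :: b :: al) = absz a :: map (addn (absz a)) (Jabs (b :: al)).
Proof.
rewrite /Jabs /= big_ord1; congr cons.
rewrite -[2%N]/(1 + 1)%N iotaDl -!map_comp; apply: eq_map => k /=.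
by rewrite big_ord_recl.
Qed.

Lemma mem_Jabs al i : all (fun a : int => a != 0) al ->
  (i.+1 < sumn [seq absz a | a <- al])%N ->
  (i.+1 \in Jabs al) = (nth 0%N (blocks al) i != nth 0%N (blocks al) i.+1).
Proof.
elim: al i => [|a al IH] i //= /andP [a_nz al_nz].
have a_gt0 : (0 < absz a)%N by rewrite absz_gt0.
rewrite blocks_cons -size_blocks.
case: al IH al_nz => [|b al] IH al_nz i_lt.
  by rewrite /Jabs /= cats0 !nth_nseq !if_same.
rewrite Jabs_cons in_cons !nth_cat size_nseq.
set B := blocks (b :: al); set m := absz a.
have sizeB : size B = sumn [seq absz x | x <- b :: al] by rewrite size_blocks.
move: i_lt; rewrite -/B -/m => i_lt.
case: (ltngtP i.+1 m) => im.
- rewrite !nth_nseq !if_same eqxx orFb.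
  by apply/negbTE/mapP => [[x _ e]]; move: im e; clearbody m; lia.
- rewrite !(nth_map 0%N); [|clearbody m B; lia..].
  rewrite orFb (_ : i.+1 = m + (i - m).+1)%N; last by lia.
  rewrite mem_map; last exact: addnI.
  rewrite IH //; last by rewrite -sizeB; clearbody m B; lia.
  by rewrite (_ : (m + (i - m).+1 - m)%N = (i - m).+1) //; lia.
- have B_gt0 : (0 < size B)%N by clearbody m B; lia.
  by rewrite im subnn nth_nseq if_same (nth_map 0%N).
Qed.

Definition block_pos (alpha : seq int) (k : nat) : bool :=
  0 < nth 0 alpha (nth 0%N (blocks alpha) k).

Definition same_block (alpha : seq int) (k : nat) : bool :=
  nth 0%N (blocks alpha) k == nth 0%N (blocks alpha) k.+1.

Lemma block_pos_same_block alpha k :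
  same_block alpha k -> block_pos alpha k = block_pos alpha k.+1.
Proof. by rewrite /same_block /block_pos => /eqP ->. Qed.

Lemma XJE n (A : {set 'I_n}) u : XJ A u = (Des u \subset A)%:R.
Proof. by rewrite ffunE; case: ifP. Qed.

Lemma Des_subset0 n (u : SB n) :
  Des u \subset [set i : 'I_n | val i == 0%N] <-> ascending_at predT u.
Proof. by apply: Des_subset_ascending => [j j0 | i j ij]; rewrite inE ?j0 ?ij. Qed.

Lemma Des_subset_Jabs n alpha (w : SB n) : signed_composition n alpha ->
  Des w \subset [set i : 'I_n | (val i == 0%N) || (val i \in Jabs alpha)] <->
  ascending_at (same_block alpha) w.
Proof.
move=> [alpha_nz alpha_sum].
apply: Des_subset_ascending => [j j0 | i j ij]; rewrite inE ?j0 //.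
by rewrite ij /= mem_Jabs ?negbK // alpha_sum; have := ltn_ord j; rewrite ij.
Qed.

Lemma Stilde_indicator n alpha (v : SB n) :
  Stilde n alpha v = (Stilde n alpha v == 1)%:R.
Proof. by rewrite ffunE; case: ifP; rewrite ?eqxx // eq_sym oner_eq0. Qed.

Lemma Stilde_eq1P n alpha (v : SB n) : Stilde n alpha v = 1 <->
  patterned (block_pos alpha) v /\ ascending_at (same_block alpha) v.
Proof.
rewrite ffunE; case: ifP => [/andP [/forallP sgn_ok /forallP asc_ok] | supp].
  split=> // _; split=> [i | i j ij same_i].
    move/eqP: (sgn_ok i); rewrite sbvalE signed_val_gt0 /block_pos => ->.
    by rewrite negbK.
  have i1n : (i.+1 < n)%N by have := ltn_ord j; rewrite ij.
  move: (asc_ok i); rewrite -/(same_block alpha i) same_i i1n /= (wext_succ v i).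
  have -> : j = Ordinal i1n by apply: val_inj.
  by rewrite -[i.+2]/(Ordinal i1n).+1 wext_succ.
split=> [/esym/eqP | [v_pat v_asc]]; first by rewrite oner_eq0.
move/negbT: supp; rewrite negb_and => /orP [] /forallPn [i]; rewrite ?negb_imply.
  by rewrite sbvalE signed_val_gt0 v_pat negbK eqxx.
case/andP => /andP [same_i i1n]; rewrite -leNgt (wext_succ v i).
by rewrite -[i.+2]/(Ordinal i1n).+1 wext_succ leNgt v_asc.
Qed.

Lemma card_uniq_witness (T : finType) (P : pred T) (x : T) (b : bool) :
  (b -> P x) -> (forall y, P y -> b /\ y = x) -> #|P| = b.
Proof.
case: b => [/(_ isT) Px | _] uniq; last by apply: eq_card0 => y; apply/negP => /uniq [].
by apply: (eq_card1 (x := x)) => y; rewrite inE; apply/idP/eqP => [/uniq [] | ->].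
Qed.

Theorem proposition7p6 (n : nat) (alpha : seq int) :
  signed_composition n alpha ->
  qbmul (XJ [set i : 'I_n | val i == 0%N]) (Stilde n alpha) = X0abs n alpha.
Proof.
move=> alpha_comp; apply/ffunP => w; rewrite qbmulE /X0abs XJE.
under eq_bigr => u _ do rewrite XJE Stilde_indicator -natrM mulnb mulrb.
rewrite -big_mkcond sumr_const; congr (_ *+ _).
have pos_link := @block_pos_same_block alpha.
apply: (card_uniq_witness (x := sorted_factor (block_pos alpha) w)).
  move=> /(Des_subset_Jabs w alpha_comp) w_asc.
  rewrite /= (Des_subset0 _).2; last exact: sorted_factor_ascending.
  apply/eqP/Stilde_eq1P; split; first exact: patterned_ldiv_sorted_factor.
  exact: ascending_ldiv_sorted_factor.
move=> u /= /andP [/Des_subset0 u_asc /eqP /Stilde_eq1P [v_pat v_asc]].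
split; last exact: sorted_factor_unique.
apply: (Des_subset_Jabs w alpha_comp).2.
exact (ascending_of_factor pos_link u_asc v_pat v_asc).
Qed.
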